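(* Let $\mathcal{U}$ and $\mathcal{V}$ be linear subspaces of $\mathbb{R}^n$ with $p := \dim \mathcal{U}$, $q := \dim\mathcal{V}$, $s := \dim(\mathcal{U}\cap\mathcal{V})$, and let $\alpha_1,\alpha_2\in\mathbb{R}$. Then the eigenvalues of $T = \Pi_{\mathcal{U}}^{\alpha_2}\Pi_{\mathcal{V}}^{\alpha_1}$ are $$\{1\}^s,\quad \{(1-\alpha_1)(1-\alpha_2)\}^{s+n-p-q},\quad \{1-\alpha_2\}^{\max(0,q-p)},\quad \{1-\alpha_1\}^{\max(0,p-q)},$$ together with $\lambda_i^{1}$ and $\lambda_i^{2}$ for every $i\in\{s+1,\dots,\min(p,q)\}$, where $$\lambda_i^{1,2} = \tfrac12\left(2-\alpha_1-\alpha_2+\alpha_1\alpha_2\cos^2\theta_i\right)\pm\sqrt{\tfrac14\left(2-\alpha_1-\alpha_2+\alpha_1\alpha_2\cos^2\theta_i\right)^2-(1-\alpha_1)(1-\alpha_2)},$$ and $\{\lambda\}^j$ denotes the eigenvalue $\lambda$ with (possibly zero) multiplicity $j$.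
   Context: For a closed nonempty set $C$, $\Pi_C$ is the (Euclidean) projection onto $C$ and the relaxed projection with parameter $\alpha$ is $\Pi_C^\alpha := (1-\alpha)I+\alpha\Pi_C$. The principal angles $\theta_1\le\theta_2\le\dots\le\theta_{\min(p,q)}$ in $[0,\pi/2]$ between $\mathcal{U}$ and $\mathcal{V}$ are defined recursively by $\cos\theta_k = \max\langle u_k,v_k\rangle$ over $u_k\in\mathcal{U}$, $v_k\in\mathcal{V}$ with $\|u_k\|=\|v_k\|=1$ and $\langle u_k,v_i\rangle=\langle u_i,v_k\rangle=0$ for $i=1,\dots,k-1$; exactly the first $s$ of them are zero. The square root may be complex. *)

From HB Require Import structures.
From mathcomp Require Import all_boot all_order all_algebra.
From mathcomp Require Import reals.
From mathcomp Require Import complex.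
Set Implicit Arguments.
Unset Strict Implicit.
Unset Printing Implicit Defensive.
Import Order.TTheory GRing.Theory Num.Theory.
Local Open Scope ring_scope.

(* Vectors of R^n are column vectors 'cV[R]_n; linear subspaces of R^n are
   {vspace 'cV[R]_n}; linear maps are n x n matrices acting by M *m x. *)

Definition dotv (R : realType) (n : nat) (x y : 'cV[R]_n) : R :=
  \sum_(i < n) x i 0 * y i 0.

Definition enorm (R : realType) (n : nat) (x : 'cV[R]_n) : R :=
  Num.sqrt (dotv x x).

Definition is_euclid_proj (R : realType) (n : nat) (C : pred 'cV[R]_n)
    (x y : 'cV[R]_n) : Prop :=
  C y /\ forall c, C c -> enorm (x - y) <= enorm (x - c).

Definition is_proj_matrix (R : realType) (n : nat) (U : {vspace 'cV[R]_n})
    (P : 'M[R]_n) : Prop :=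
  forall x : 'cV[R]_n, is_euclid_proj (fun y => y \in U) x (P *m x).

Definition relax_mx (R : realType) (n : nat) (alpha : R) (P : 'M[R]_n)
    : 'M[R]_n :=
  (1 - alpha)%:M + alpha *: P.

(* (u k, v k)_{k < m} are principal vector pairs of U and V, defined
   recursively as in the paper: u_k in U, v_k in V unit vectors with
   <u_k, v_i> = <u_i, v_k> = 0 for i < k, maximizing <u_k, v_k> among all
   such pairs; then cos theta_k = <u_k, v_k>. *)
Definition principal_vectors (R : realType) (n : nat)
    (U V : {vspace 'cV[R]_n}) (m : nat) (u v : nat -> 'cV[R]_n) : Prop :=
  forall k, (k < m)%N ->
    [/\ u k \in U, v k \in V, enorm (u k) = 1 /\ enorm (v k) = 1,
        (forall i, (i < k)%N -> dotv (u k) (v i) = 0 /\ dotv (u i) (v k) = 0)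
      & forall x y, x \in U -> y \in V -> enorm x = 1 -> enorm y = 1 ->
          (forall i, (i < k)%N -> dotv x (v i) = 0 /\ dotv (u i) y = 0) ->
          dotv x y <= dotv (u k) (v k)].

Definition RtoC (R : realType) (x : R) : R[i] := (x%:C)%C.

Definition lam_b (R : realType) (a1 a2 c : R) : R :=
  2 - a1 - a2 + a1 * a2 * c ^+ 2.

Definition lam1 (R : realType) (a1 a2 c : R) : R[i] :=
  RtoC (lam_b a1 a2 c / 2) +
  sqrtC (RtoC (lam_b a1 a2 c ^+ 2 / 4 - (1 - a1) * (1 - a2))).

Definition lam2 (R : realType) (a1 a2 c : R) : R[i] :=
  RtoC (lam_b a1 a2 c / 2) -
  sqrtC (RtoC (lam_b a1 a2 c ^+ 2 / 4 - (1 - a1) * (1 - a2))).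

From HB Require Import structures.
From mathcomp Require Import all_boot all_order all_algebra.
From mathcomp Require Import reals complex.
From mathcomp Require Import ring lra zify.
Import Order.TTheory GRing.Theory Num.Theory.
Local Open Scope ring_scope.
Set Implicit Arguments.
Unset Strict Implicit.
Unset Printing Implicit Defensive.

(* The maximality defining principal vectors forces PV u_k = cos θ_k v_k and
   PU v_k = cos θ_k u_k. Let r be the number of nonzero cosines: then u_0..u_(r-1)
   and v_0..v_(r-1) are orthonormal, and U (resp. V) is their span plus a residual
   space orthogonal to V (resp. U). In the resulting bases PU = E L, PV = F L' with
   PU F = E G and PV E = F G^T, where G = diag (cos θ_i) plus zero blocks. Since
   T - (1-α1)(1-α2) I factors through [E F], Sylvester's determinant identity and a
   Schur complement reduce char T to det ((X-(1-α1))(X-(1-α2)) I - α1 α2 X G G^T),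
   a product of the quadratics X^2 - b_i X + (1-α1)(1-α2) with roots λ_i^(1,2).
   Finally cos θ_i = 1 exactly for i < dim (U ∩ V), since U ∩ V lies in the span of
   the u_i with cos θ_i = 1. *)
Section Dot.
Variables (R : realType) (n : nat).
Implicit Types (x y z : 'cV[R]_n) (A : 'M[R]_n).

Lemma dotvE x y : dotv x y = (x^T *m y) 0 0.
Proof. by rewrite /dotv !mxE; apply: eq_bigr => i _; rewrite !mxE. Qed.

Lemma dotvC x y : dotv x y = dotv y x.
Proof. by rewrite /dotv; apply: eq_bigr => i _; rewrite mulrC. Qed.

Lemma dotvDl x y z : dotv (x + y) z = dotv x z + dotv y z.
Proof. by rewrite /dotv -big_split; apply: eq_bigr => i _; rewrite mxE mulrDl. Qed.

Lemma dotvDr x y z : dotv z (x + y) = dotv z x + dotv z y.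
Proof. by rewrite dotvC dotvDl !(dotvC z). Qed.

Lemma dotvZl a x y : dotv (a *: x) y = a * dotv x y.
Proof. by rewrite /dotv mulr_sumr; apply: eq_bigr => i _; rewrite mxE mulrA. Qed.

Lemma dotvZr a x y : dotv y (a *: x) = a * dotv y x.
Proof. by rewrite dotvC dotvZl dotvC. Qed.

Lemma dotvNl x y : dotv (- x) y = - dotv x y.
Proof. by rewrite -scaleN1r dotvZl mulN1r. Qed.

Lemma dotvBl x y z : dotv (x - y) z = dotv x z - dotv y z.
Proof. by rewrite dotvDl dotvNl. Qed.

Lemma dotvBr x y z : dotv z (x - y) = dotv z x - dotv z y.
Proof. by rewrite dotvC dotvBl !(dotvC z). Qed.

Lemma dotv0l x : dotv 0 x = 0.
Proof. by rewrite /dotv big1 // => i _; rewrite mxE mul0r. Qed.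

Lemma dotv0r x : dotv x 0 = 0.
Proof. by rewrite dotvC dotv0l. Qed.

Lemma dotv_suml I (r : seq I) (P : pred I) (F : I -> 'cV[R]_n) y :
  dotv (\sum_(i <- r | P i) F i) y = \sum_(i <- r | P i) dotv (F i) y.
Proof.
rewrite /dotv exchange_big /=; apply: eq_bigr => j _.
by rewrite summxE mulr_suml.
Qed.

Lemma dotv_sumr I (r : seq I) (P : pred I) (F : I -> 'cV[R]_n) y :
  dotv y (\sum_(i <- r | P i) F i) = \sum_(i <- r | P i) dotv y (F i).
Proof. by rewrite dotvC dotv_suml; apply: eq_bigr => i _; rewrite dotvC. Qed.

Lemma dotv_mulmxl A x y : dotv (A *m x) y = dotv x (A^T *m y).
Proof. by rewrite !dotvE trmx_mul mulmxA. Qed.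

Lemma dotvv_ge0 x : 0 <= dotv x x.
Proof. by rewrite /dotv sumr_ge0 // => i _; rewrite -expr2 sqr_ge0. Qed.

Lemma dotvv_eq0 x : dotv x x = 0 -> x = 0.
Proof.
move=> /eqP; rewrite /dotv psumr_eq0; last by move=> i _; rewrite -expr2 sqr_ge0.
move=> /allP x0; apply/matrixP => i j; rewrite (ord1 j) mxE.
by have := x0 i (mem_index_enum _); rewrite /= mulf_eq0 orbb => /eqP.
Qed.

Lemma dotv_nondegen z : (forall x, dotv x z = 0) -> z = 0.
Proof. by move=> z_orth; apply: dotvv_eq0. Qed.

Lemma enorm_eq1 x : enorm x = 1 <-> dotv x x = 1.
Proof.
split=> [x1 | xx1]; last by rewrite /enorm xx1 sqrtr1.
by rewrite -[dotv x x]sqr_sqrtr ?dotvv_ge0 // -/(enorm x) x1 expr1n.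
Qed.

Lemma enorm_le_dotvv x y : enorm x <= enorm y -> dotv x x <= dotv y y.
Proof. by rewrite /enorm ler_sqrt // dotvv_ge0. Qed.

Lemma enormZ a x : enorm (a *: x) = `|a| * enorm x.
Proof.
rewrite /enorm dotvZl dotvZr mulrA sqrtrM -expr2 ?sqr_ge0 //.
by rewrite sqrtr_sqr.
Qed.

Lemma enorm_gt0 x : x != 0 -> 0 < enorm x.
Proof.
move=> x_neq0; rewrite /enorm sqrtr_gt0 lt_def dotvv_ge0 andbT.
by apply: contra x_neq0 => /eqP/dotvv_eq0 ->.
Qed.

Lemma enorm_normalize x : x != 0 -> enorm ((enorm x)^-1 *: x) = 1.
Proof.
move=> /enorm_gt0 x_gt0; rewrite enormZ ger0_norm ?invr_ge0 ?ltW //.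
by rewrite mulVf // gt_eqF.
Qed.

End Dot.

Lemma eq_mx_mul_delta (R : nzRingType) m k (B C : 'M[R]_(m, k)) :
  (forall l : 'I_k, B *m delta_mx l (0 : 'I_1) = C *m delta_mx l 0) -> B = C.
Proof.
move=> BC; apply/matrixP => i j.
by have := congr1 (fun M : 'cV_m => M i 0) (BC j); rewrite -!colE !mxE.
Qed.

Lemma linear_le_quadratic_eq0 (R : realFieldType) (d K : R) :
  0 <= K -> (forall t, t * d <= t ^+ 2 * K) -> d = 0.
Proof.
move=> K_ge0 le_dK; pose e := (K + 1)^-1.
have e_gt0 : 0 < e by rewrite invr_gt0 ltr_wpDl.
have eK : e * K = 1 - e by rewrite /e -[X in X - _](@mulVf _ (K + 1)) ?gt_eqF ?ltr_wpDl //; ring.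
have := le_dK (d * e); rewrite exprMn expr2 => le_de.
have de2 : (d * e) ^+ 2 <= 0 by rewrite expr2; nra.
have /eqP : d * e = 0 by apply/eqP; rewrite -sqrf_eq0 eq_le de2 sqr_ge0.
by rewrite mulf_eq0 (gt_eqF e_gt0) orbF => /eqP.
Qed.

Section Projection.
Variables (R : realType) (n : nat) (U : {vspace 'cV[R]_n}) (P : 'M[R]_n).
Hypothesis hP : is_proj_matrix U P.

Lemma proj_memv x : P *m x \in U.
Proof. by case: (hP x). Qed.

Lemma proj_resid_orth x c : c \in U -> dotv (x - P *m x) c = 0.
Proof.
move=> cU; apply: (@linear_le_quadratic_eq0 _ _ (dotv c c / 2)).
  by rewrite divr_ge0 // dotvv_ge0.
move=> t; case: (hP x) => _ /(_ (P *m x + t *: c)) min_Px.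
have /min_Px/enorm_le_dotvv : P *m x + t *: c \in U by rewrite memvD ?memvZ ?proj_memv.
rewrite opprD addrA; move: (x - P *m x) => e.
rewrite dotvBl !dotvBr !dotvZl !dotvZr (dotvC c e) expr2; lra.
Qed.

Lemma proj_fix x : x \in U -> P *m x = x.
Proof.
move=> xU; apply/eqP; rewrite eq_sym -subr_eq0; apply/eqP/dotvv_eq0.
by apply: proj_resid_orth; rewrite memvB ?proj_memv.
Qed.

Lemma proj_idem : P *m P = P.
Proof. by apply: eq_mx_mul_delta => l; rewrite -mulmxA proj_fix ?proj_memv. Qed.

(* The residual x - P x is orthogonal to U, so (1 - P)^T P = 0. *)
Lemma trmx_proj : P^T = P.
Proof.
have TPP : P^T *m P = P.
  have : (1%:M - P)^T *m P = 0.
    apply: eq_mx_mul_delta => l; rewrite mul0mx; apply: dotv_nondegen => x.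
    rewrite -mulmxA -dotv_mulmxl mulmxBl mul1mx.
    exact/proj_resid_orth/proj_memv.
  by move/eqP; rewrite linearB /= trmx1 mulmxBl mul1mx subr_eq0 => /eqP <-.
by rewrite -TPP trmx_mul trmxK TPP.
Qed.

Lemma dotv_proj x y : dotv (P *m x) y = dotv x (P *m y).
Proof. by rewrite dotv_mulmxl trmx_proj. Qed.

Lemma proj_orth_eq0 y : (forall c, c \in U -> dotv y c = 0) -> P *m y = 0.
Proof.
move=> y_orth; apply: dotvv_eq0; rewrite dotv_proj mulmxA proj_idem dotvC.
by rewrite dotv_proj y_orth // proj_memv.
Qed.

End Projection.

Section MaxPair.
Variables (R : realType) (n : nat).
Variables (PX PY : 'cV[R]_n -> Prop) (x0 y0 : 'cV[R]_n).
Hypothesis PX_lin : forall a b x y, PX x -> PX y -> PX (a *: x + b *: y).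
Hypothesis PY_lin : forall a b x y, PY x -> PY y -> PY (a *: x + b *: y).
Hypotheses (PX_x0 : PX x0) (PY_y0 : PY y0) (x0_unit : enorm x0 = 1) (y0_unit : enorm y0 = 1).
Hypothesis x0y0_max : forall x y, PX x -> PY y -> enorm x = 1 -> enorm y = 1 ->
  dotv x y <= dotv x0 y0.

Let c := dotv x0 y0.

Lemma max_pair_bound x y : PX x -> PY y -> dotv x y <= c * enorm x * enorm y.
Proof.
move=> Px Py.
have [->|x_neq0] := eqVneq x 0; first by rewrite dotv0l /enorm dotv0l sqrtr0 !(mulr0, mul0r).
have [->|y_neq0] := eqVneq y 0; first by rewrite dotv0r /enorm dotv0l sqrtr0 !(mulr0, mul0r).
have xy_gt0 : 0 < enorm x * enorm y by rewrite mulr_gt0 ?enorm_gt0.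
have := x0y0_max (PX_lin (enorm x)^-1 0 Px Px) (PY_lin (enorm y)^-1 0 Py Py).
rewrite !scale0r !addr0 => /(_ (enorm_normalize x_neq0) (enorm_normalize y_neq0)).
by rewrite dotvZl dotvZr mulrA -invfM -mulrA -ler_pdivrMr // mulrC.
Qed.

Lemma max_pair_ge0 : 0 <= c.
Proof.
have := x0y0_max (PX_lin (-1) 0 PX_x0 PX_x0) PY_y0.
rewrite scale0r addr0 enormZ normrN normr1 mul1r => /(_ x0_unit y0_unit).
by rewrite dotvZl -/c; lra.
Qed.

(* First-order optimality of y0 in the direction y - <y0, y> y0, orthogonal to y0. *)
Lemma max_pair_dotv y : PY y -> dotv x0 y = c * dotv y0 y.
Proof.
move=> Py; pose w := 1 *: y + (- dotv y0 y) *: y0.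
have y0y0 : dotv y0 y0 = 1 by apply/enorm_eq1.
have y0w : dotv y0 w = 0 by rewrite /w dotvDr !dotvZr y0y0 mul1r mulr1 addrN.
suff : dotv x0 w = 0 by rewrite /w dotvDr !dotvZr mul1r -/c; lra.
have Pw : PY w by apply: PY_lin.
apply: (@linear_le_quadratic_eq0 _ _ (c * dotv w w / 2)).
  by rewrite divr_ge0 // mulr_ge0 ?max_pair_ge0 ?dotvv_ge0.
move=> t; clearbody w.
have := max_pair_bound PX_x0 (PY_lin 1 t PY_y0 Pw).
rewrite x0_unit mulr1 scale1r dotvDr dotvZr -/c.
have norm_yt : enorm (y0 + t *: w) <= 1 + t ^+ 2 * dotv w w / 2.
  have ww := dotvv_ge0 w; have tt := sqr_ge0 t.
  have rhs_ge0 : 0 <= 1 + t ^+ 2 * dotv w w / 2 by rewrite addr_ge0 // divr_ge0 // mulr_ge0.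
  rewrite /enorm -(ger0_norm rhs_ge0) -sqrtr_sqr ler_sqrt ?sqr_ge0 //.
  rewrite dotvDl !dotvDr !dotvZl !dotvZr y0w (dotvC w y0) y0w y0y0.
  have := sqr_ge0 (t ^+ 2 * dotv w w / 2); rewrite !expr2; lra.
have := ler_wpM2l max_pair_ge0 norm_yt; lra.
Qed.

End MaxPair.

Lemma principal_vectors_sym (R : realType) n (U V : {vspace 'cV[R]_n}) m u v :
  principal_vectors U V m u v -> principal_vectors V U m v u.
Proof.
move=> hpv k km; have [uU vV [u1 v1] orth umax] := hpv k km.
split=> // [i ik | x y xV yU x1 y1 xy_orth].
  by have [? ?] := orth i ik; rewrite dotvC; split; last rewrite dotvC.
rewrite dotvC (dotvC (v k)); apply: umax => // i ik.
by have [? ?] := xy_orth i ik; rewrite dotvC; split; last rewrite dotvC.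
Qed.

Definition pcos (R : realType) n (u v : nat -> 'cV[R]_n) k : R := dotv (u k) (v k).

Lemma pcosC (R : realType) n (u v : nat -> 'cV[R]_n) : pcos v u = pcos u v.
Proof. by apply: boolp.funext => k; rewrite /pcos dotvC. Qed.

Definition pcos_support (R : realType) n (u v : nat -> 'cV[R]_n) (m r : nat) :=
  (r <= m)%N /\ forall i, (i < m)%N -> (pcos u v i == 0) = (r <= i)%N.

Lemma pcos_support_eq0 (R : realType) n (u v : nat -> 'cV[R]_n) m r i :
  pcos_support u v m r -> (r <= i)%N -> (i < m)%N -> pcos u v i = 0.
Proof. by case=> _ supp ri im; apply/eqP; rewrite supp. Qed.

Section PrincipalVectors.
Variables (R : realType) (n : nat) (U V : {vspace 'cV[R]_n}) (PV : 'M[R]_n).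
Variables (m : nat) (u v : nat -> 'cV[R]_n).
Hypothesis hPV : is_proj_matrix V PV.
Hypothesis hpv : principal_vectors U V m u v.

Local Notation pcos := (pcos u v).

Lemma pv_memU k : (k < m)%N -> u k \in U.
Proof. by move=> km; case: (hpv km). Qed.

Lemma pv_memV k : (k < m)%N -> v k \in V.
Proof. by move=> km; case: (hpv km). Qed.

Lemma pv_unitU k : (k < m)%N -> dotv (u k) (u k) = 1.
Proof. by move=> km; case: (hpv km) => _ _ [/enorm_eq1]. Qed.

Lemma pv_unitV k : (k < m)%N -> dotv (v k) (v k) = 1.
Proof. by move=> km; case: (hpv km) => _ _ [_ /enorm_eq1]. Qed.

Lemma pv_cross i j : (i < m)%N -> (j < m)%N -> i != j -> dotv (u j) (v i) = 0.
Proof.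
move=> im jm; case: (ltngtP i j) => // ij _.
  by case: (hpv jm) => _ _ _ /(_ i ij) [].
by case: (hpv im) => _ _ _ /(_ j ij) [].
Qed.

(* The candidates for the k-th principal pair in the recursive definition. *)
Let admU k x := x \in U /\ forall i, (i < k)%N -> dotv x (v i) = 0.
Let admV k y := y \in V /\ forall i, (i < k)%N -> dotv (u i) y = 0.

Let admU_lin k a b x y : admU k x -> admU k y -> admU k (a *: x + b *: y).
Proof.
move=> [xU x_orth] [yU y_orth]; split=> [|i ik]; first by rewrite memvD ?memvZ.
by rewrite dotvDl !dotvZl x_orth // y_orth // !mulr0 addr0.
Qed.

Let admV_lin k a b x y : admV k x -> admV k y -> admV k (a *: x + b *: y).
Proof.
move=> [xV x_orth] [yV y_orth]; split=> [|i ik]; first by rewrite memvD ?memvZ.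
by rewrite dotvDr !dotvZr x_orth // y_orth // !mulr0 addr0.
Qed.

Let admU_u k l : (k <= l)%N -> (l < m)%N -> admU k (u l).
Proof.
move=> kl lm; split=> [|i ik]; first exact: pv_memU.
have il : (i < l)%N := leq_trans ik kl.
by apply: pv_cross; rewrite ?(ltn_trans il) // neq_ltn il.
Qed.

Let admV_v k l : (k <= l)%N -> (l < m)%N -> admV k (v l).
Proof.
move=> kl lm; split=> [|i ik]; first exact: pv_memV.
have il : (i < l)%N := leq_trans ik kl.
by apply: pv_cross; rewrite ?(ltn_trans il) // neq_ltn il orbT.
Qed.

Let adm_max k x y : (k < m)%N -> admU k x -> admV k y -> enorm x = 1 -> enorm y = 1 ->
  dotv x y <= pcos k.
Proof.
move=> km [xU x_orth] [yV y_orth] x1 y1.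
by case: (hpv km) => _ _ _ _; apply=> // i ik; rewrite x_orth ?y_orth.
Qed.

Let unitU k : (k < m)%N -> enorm (u k) = 1. Proof. by move=> km; case: (hpv km) => _ _ []. Qed.
Let unitV k : (k < m)%N -> enorm (v k) = 1. Proof. by move=> km; case: (hpv km) => _ _ []. Qed.

Lemma pcos_nonincr j l : (j <= l)%N -> (l < m)%N -> pcos l <= pcos j.
Proof.
move=> jl lm; apply: adm_max (leq_ltn_trans jl lm) (admU_u jl lm) (admV_v jl lm) _ _.
  exact: unitU.
exact: unitV.
Qed.

Lemma pcos_ge0 k : (k < m)%N -> 0 <= pcos k.
Proof.
move=> km; apply: (max_pair_ge0 (@admU_lin k) (admU_u (leqnn k) km) (admV_v (leqnn k) km)).
- exact: unitU.
- exact: unitV.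
- by move=> x y; apply: adm_max.
Qed.

Lemma pcos_le1 k : (k < m)%N -> pcos k <= 1.
Proof.
move=> km; have := dotvv_ge0 (u k - v k).
rewrite dotvBl !dotvBr pv_unitU // pv_unitV // (dotvC (v k)) /pcos; lra.
Qed.

Lemma pv_bound k x y : (k < m)%N -> x \in U -> y \in V ->
  (forall i, (i < k)%N -> dotv x (v i) = 0 /\ dotv (u i) y = 0) ->
  dotv x y <= pcos k * enorm x * enorm y.
Proof.
move=> km xU yV xy_orth.
apply: (max_pair_bound (@admU_lin k) (@admV_lin k)); first by move=> x' y'; apply: adm_max.
  by split=> // i ik; case: (xy_orth i ik).
by split=> // i ik; case: (xy_orth i ik).
Qed.

(* By induction on k: PV u_k is admissible at stage k, and so is its residual
   against pcos k v_k, whose norm then vanishes by max_pair_dotv. *)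
Lemma proj_pv k : (k < m)%N -> PV *m u k = pcos k *: v k.
Proof.
elim/ltn_ind: k => k IH km.
have opt := max_pair_dotv (@admU_lin k) (@admV_lin k) (admU_u (leqnn k) km)
  (admV_v (leqnn k) km) (unitU km) (unitV km) (fun x y => @adm_max k x y km).
set z := PV *m u k.
have adm_z : admV k z.
  split=> [|i ik]; first exact: proj_memv hPV _.
  rewrite /z -(dotv_proj hPV) (IH i ik (ltn_trans ik km)) dotvZl dotvC.
  by rewrite pv_cross ?(ltn_trans ik) ?ltn_eqF ?mulr0.
have adm_d : admV k (1 *: z + (- pcos k) *: v k) by apply: admV_lin (admV_v _ km).
apply/eqP; rewrite -subr_eq0; apply/eqP/dotvv_eq0.
have -> : z - pcos k *: v k = 1 *: z + (- pcos k) *: v k by rewrite scale1r scaleNr.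
move: adm_d; set d := _ + _ => adm_d.
have dV : d \in V by case: adm_d.
rewrite {1}/d dotvDl !dotvZl /z (dotv_proj hPV) (proj_fix hPV dV) opt //.
by rewrite mul1r /pcos; ring.
Qed.

Lemma exists_pcos_support : exists r, pcos_support u v m r.
Proof.
pose r := find (fun i => pcos i == 0) (iota 0 m).
have r_le_m : (r <= m)%N by rewrite /r -[X in (_ <= X)%N](size_iota 0 m) find_size.
exists r; split=> // i im; have [ir | ri] := ltnP i r.
  by have := before_find 0 ir; rewrite nth_iota // add0n.
have rm : (r < m)%N := leq_ltn_trans ri im.
have pcos_r : pcos r = 0.
  have has0 : has (fun i => pcos i == 0) (iota 0 m) by rewrite has_find size_iota.
  by have := nth_find 0 has0; rewrite -/r nth_iota // add0n => /eqP.
by rewrite eq_le pcos_ge0 // andbT -pcos_r pcos_nonincr.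
Qed.

End PrincipalVectors.

Section OrthonormalFamily.
Variables (R : realType) (n : nat) (U : {vspace 'cV[R]_n}) (r : nat) (w : nat -> 'cV[R]_n).
Hypothesis wU : forall i, (i < r)%N -> w i \in U.
Hypothesis w_orthonormal :
  forall i j, (i < r)%N -> (j < r)%N -> dotv (w i) (w j) = (i == j)%:R.

Definition resid_mx : 'M[R]_n := 1%:M - \sum_(i < r) w i *m (w i)^T.

Definition resid_space := (linfun (mulmx resid_mx) @: U)%VS.

Lemma resid_mxE x : resid_mx *m x = x - \sum_(i < r) dotv (w i) x *: w i.
Proof.
rewrite /resid_mx mulmxBl mul1mx mulmx_suml; congr (_ - _); apply: eq_bigr => i _.
by rewrite -mulmxA [_ *m x]mx11_scalar -dotvE mul_mx_scalar.
Qed.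

Lemma resid_decomp x : x = \sum_(i < r) dotv (w i) x *: w i + resid_mx *m x.
Proof. by rewrite resid_mxE addrC subrK. Qed.

Lemma dotv_onb_sum j (k : 'I_r -> R) (jr : (j < r)%N) :
  dotv (w j) (\sum_(i < r) k i *: w i) = k (Ordinal jr).
Proof.
rewrite dotv_sumr (bigD1 (Ordinal jr)) //= big1 ?addr0.
  by rewrite dotvZr w_orthonormal // eqxx mulr1.
move=> i ij; rewrite dotvZr w_orthonormal // (_ : (j == i) = false) ?mulr0 //.
by apply: contraNF ij => /eqP ji; apply/eqP/val_inj.
Qed.

Lemma resid_orth j x : (j < r)%N -> dotv (w j) (resid_mx *m x) = 0.
Proof.
move=> jr; rewrite resid_mxE dotvBr (dotv_onb_sum (fun i : 'I_r => dotv (w i) x) jr).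
by rewrite subrr.
Qed.

Lemma mem_resid_spaceP y :
  y \in resid_space <-> y \in U /\ forall j, (j < r)%N -> dotv (w j) y = 0.
Proof.
split=> [/memv_imgP [x xU ->] | [yU y_orth]].
  rewrite lfunE /= resid_mxE; split=> [|j jr]; last by rewrite -resid_mxE resid_orth.
  by rewrite rpredB // rpred_sum // => i _; rewrite memvZ // wU.
apply/memv_imgP; exists y => //; rewrite lfunE /= resid_mxE big1 ?subr0 // => i _.
by rewrite y_orth // scale0r.
Qed.

Lemma resid_mem_space x : x \in U -> resid_mx *m x \in resid_space.
Proof. by move=> xU; apply/memv_imgP; exists x; rewrite ?lfunE. Qed.

Definition onb_tuple := [tuple of mkseq w r].

Lemma onb_tupleE (i : 'I_r) : onb_tuple`_i = w i.
Proof. by rewrite /= nth_mkseq. Qed.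

Lemma free_onb_tuple : free onb_tuple.
Proof.
apply/freeP => k sum_k0 i.
have := dotv_onb_sum k (ltn_ord i); rewrite (_ : Ordinal _ = i); last exact: val_inj.
move=> <-; rewrite (eq_bigr (fun j => k j *: onb_tuple`_j)) ?sum_k0 ?dotv0r //.
by move=> j _; rewrite onb_tupleE.
Qed.

Lemma dim_resid_space : \dim U = (r + \dim resid_space)%N.
Proof.
have span_dim : \dim <<onb_tuple>> = r by rewrite (eqP free_onb_tuple) size_tuple.
have U_split : U = (<<onb_tuple>> + resid_space)%VS.
  apply/eqP; rewrite eqEsubv; apply/andP; split.
    apply/subvP => x xU; rewrite (resid_decomp x) memv_add ?resid_mem_space //.
    rewrite rpred_sum // => i _; rewrite memvZ // -onb_tupleE memv_span // mem_nth //.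
    by rewrite size_tuple.
  rewrite subv_add; apply/andP; split; last by apply/subvP => y /mem_resid_spaceP [].
  apply/span_subvP => x /(nthP 0) [i ir <-]; move: ir; rewrite size_tuple => ir.
  by rewrite /= nth_mkseq // wU.
rewrite {1}U_split dimv_disjoint_sum ?span_dim //.
apply/eqP; rewrite -subv0; apply/subvP => x /memv_capP [x_span /mem_resid_spaceP [_ x_orth]].
rewrite memv0; apply/eqP/dotvv_eq0.
rewrite {1}(coord_span x_span) dotv_suml big1 // => i _.
by rewrite dotvZl onb_tupleE x_orth // mulr0.
Qed.

End OrthonormalFamily.

Definition mx_of_cols (R : Type) n k (f : 'I_k -> 'cV[R]_n) : 'M[R]_(n, k) :=
  \matrix_(i, j) f j i 0.

Section MatrixOfColumns.
Variables (R : comPzRingType) (n k : nat).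
Implicit Types (f g : 'I_k -> 'cV[R]_n).

Lemma mulmx_cols (A : 'M[R]_n) f : A *m mx_of_cols f = mx_of_cols (fun j => A *m f j).
Proof. by apply/matrixP => i j; rewrite !mxE; apply: eq_bigr => l _; rewrite !mxE. Qed.

Lemma mx_of_cols_mul f (a : 'cV[R]_k) : mx_of_cols f *m a = \sum_j a j 0 *: f j.
Proof.
apply/matrixP => i l; rewrite (ord1 l) !mxE summxE; apply: eq_bigr => j _.
by rewrite !mxE mulrC.
Qed.

Lemma eq_mx_of_cols f g : f =1 g -> mx_of_cols f = mx_of_cols g.
Proof. by move=> fg; apply/matrixP => i j; rewrite !mxE fg. Qed.

End MatrixOfColumns.

Section AdaptedBasis.
Variables (R : realType) (n : nat) (U : {vspace 'cV[R]_n}) (PU : 'M[R]_n).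
Hypothesis hPU : is_proj_matrix U PU.
Variables (r : nat) (w : nat -> 'cV[R]_n).
Hypothesis wU : forall i, (i < r)%N -> w i \in U.
Hypothesis w_orthonormal :
  forall i j, (i < r)%N -> (j < r)%N -> dotv (w i) (w j) = (i == j)%:R.

Local Notation Us := (resid_space U r w).
Local Notation d := (\dim Us).
Local Notation bs := (vbasis Us).

Definition onb_mx : 'M[R]_(n, r) := mx_of_cols (fun j : 'I_r => w j).
Definition resid_basis_mx : 'M[R]_(n, d) := mx_of_cols (fun j : 'I_d => bs`_j).

Definition adapted_mx : 'M[R]_(n, r + d) := row_mx onb_mx resid_basis_mx.

Lemma resid_basis_mem (j : 'I_d) : bs`_j \in Us.
Proof. by apply: vbasis_mem; rewrite mem_nth // size_tuple. Qed.

Lemma resid_basis_mx_mem (a : 'cV[R]_d) : resid_basis_mx *m a \in Us.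
Proof. by rewrite mx_of_cols_mul rpred_sum // => j _; rewrite memvZ // resid_basis_mem. Qed.

Lemma proj_adapted_mx : PU *m adapted_mx = adapted_mx.
Proof.
rewrite /adapted_mx mul_mx_row !mulmx_cols; congr row_mx; apply: eq_mx_of_cols => j.
  by rewrite (proj_fix hPU) // wU.
rewrite (proj_fix hPU) //.
by have /(mem_resid_spaceP wU w_orthonormal) [] := resid_basis_mem j.
Qed.

Lemma adapted_mx_inj (a : 'cV[R]_(r + d)) : adapted_mx *m a = 0 -> a = 0.
Proof.
rewrite -[a]vsubmxK /adapted_mx mul_row_col.
set a1 := usubmx a; set a2 := dsubmx a => sum0.
have a1_0 : a1 = 0.
  apply/matrixP => i l; rewrite (ord1 l) [RHS]mxE.
  have := congr1 (dotv (w i)) sum0; rewrite dotvDr dotv0r.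
  have /(mem_resid_spaceP wU w_orthonormal) [_ -> //] := resid_basis_mx_mem a2.
  rewrite addr0 /onb_mx mx_of_cols_mul (dotv_onb_sum w_orthonormal (fun j => a1 j 0) (ltn_ord i)).
  by move=> <-; congr (a1 _ 0); apply: val_inj.
move: sum0; rewrite a1_0 mulmx0 add0r /resid_basis_mx mx_of_cols_mul => sum0.
suff -> : a2 = 0 by rewrite col_mx0.
apply/matrixP => i l; rewrite (ord1 l) [RHS]mxE.
by move/freeP: (basis_free (vbasisP Us)) => /(_ (fun j => a2 j 0) sum0 i).
Qed.

Definition adapted_coord (x : 'cV[R]_n) : 'cV[R]_(r + d) :=
  col_mx (\col_(i < r) dotv (w i) x) (\col_(j < d) coord bs j (resid_mx r w *m x)).

Lemma adapted_coordK x : x \in U -> adapted_mx *m adapted_coord x = x.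
Proof.
move=> xU; rewrite /adapted_mx /adapted_coord mul_row_col /onb_mx /resid_basis_mx.
rewrite !mx_of_cols_mul {3}(resid_decomp r w x); congr (_ + _).
  by apply: eq_bigr => i _; rewrite mxE.
rewrite {2}(coord_vbasis (resid_mem_space r w xU)).
by apply: eq_bigr => i _; rewrite mxE.
Qed.

Definition adapted_coord_mx : 'M[R]_(r + d, n) :=
  \matrix_(i, l) adapted_coord (PU *m delta_mx l 0) i 0.

Lemma adapted_mx_coord : adapted_mx *m adapted_coord_mx = PU.
Proof.
apply: eq_mx_mul_delta => l; rewrite -mulmxA.
have -> : adapted_coord_mx *m delta_mx l 0 = adapted_coord (PU *m delta_mx l 0).
  by rewrite -colE; apply/matrixP => i j; rewrite (ord1 j) !mxE.
by rewrite adapted_coordK // proj_memv.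
Qed.

Lemma adapted_coord_mxK : adapted_coord_mx *m adapted_mx = 1%:M.
Proof.
apply: eq_mx_mul_delta => l; apply/eqP; rewrite -subr_eq0 -mulmxBl; apply/eqP.
apply: adapted_mx_inj; rewrite mulmxBl mulmxBr mul1mx !mulmxA adapted_mx_coord.
by rewrite -mulmxA mulmxA proj_adapted_mx subrr.
Qed.

End AdaptedBasis.

Section DeterminantIdentities.
Variable (Rg : comNzRingType).

Lemma det_sylvester n k (A : 'M[Rg]_(n, k)) (B : 'M[Rg]_(k, n)) (x : Rg) :
  x ^+ k * \det (x%:M - A *m B) = x ^+ n * \det (x%:M - B *m A).
Proof.
pose M := block_mx (x%:M : 'M_n) A B (1%:M : 'M_k).
have M_lower : M *m block_mx 1%:M 0 (- B) 1%:M = block_mx (x%:M - A *m B) A 0 1%:M.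
  by rewrite mulmx_block !mulmx1 !mulmx0 !mul1mx !mulmxN !add0r subrr.
have M_upper : M *m block_mx 1%:M (- A) 0 (x%:M) = block_mx x%:M 0 B (x%:M - B *m A).
  rewrite mulmx_block !mulmx1 !mulmx0 !mul1mx !mulmxN !addr0 mul_mx_scalar mul_scalar_mx.
  by rewrite addNr addrC.
have := congr1 determinant M_lower.
rewrite det_mulmx det_lblock det_ublock !det1 !mulr1 => <-.
have := congr1 determinant M_upper.
by rewrite det_mulmx det_ublock det_lblock det1 !det_scalar mul1r mulrC => ->.
Qed.

Lemma det_block_scalar p q (A : 'M[Rg]_p) (B : 'M[Rg]_(p, q)) (C : 'M[Rg]_(q, p)) (d : Rg) :
  \det (block_mx A B C d%:M) * d ^+ p = d ^+ q * \det (d *: A - B *m C).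
Proof.
have : block_mx A B C d%:M *m block_mx d%:M 0 (- C) 1%:M = block_mx (d *: A - B *m C) B 0 d%:M.
  rewrite mulmx_block !mulmx1 !mulmx0 !mulmxN !mul_mx_scalar mul_scalar_mx.
  by rewrite subrr !add0r.
move/(congr1 determinant); rewrite det_mulmx det_lblock det_ublock det1 !det_scalar mulr1.
by move=> ->; rewrite mulrC.
Qed.

End DeterminantIdentities.

Section RelaxedProductCharPoly.
Variables (R : realType) (n P Q : nat) (PU PV : 'M[R]_n).
Variables (E : 'M[R]_(n, P)) (L : 'M[R]_(P, n)) (F : 'M[R]_(n, Q)) (L' : 'M[R]_(Q, n)).
Variables (G : 'M[R]_(P, Q)) (H : 'M[R]_(Q, P)) (a1 a2 : R).
Hypotheses (EL : E *m L = PU) (LE : L *m E = 1%:M) (FL' : F *m L' = PV) (L'F : L' *m F = 1%:M).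
Hypotheses (PU_F : PU *m F = E *m G) (PV_E : PV *m E = F *m H).

Let c1 := 1 - a1.
Let c2 := 1 - a2.
Let k := c1 * c2.
Let T := relax_mx a2 PU *m relax_mx a1 PV.

Let W := row_mx E F.
Let N := col_mx ((a2 * c1) *: L + (a1 * a2) *: (L *m PV)) ((c2 * a1) *: L').

Lemma relax_prod_lowrank : T = k%:M + W *m N.
Proof.
have -> : T = (c2 * c1)%:M + (c2 * a1) *: PV + (a2 * c1) *: PU + (a1 * a2) *: (PU *m PV).
  rewrite /T /relax_mx mulmxDl !mulmxDr -!scalemxAr -!scalemxAl.
  rewrite !mul_scalar_mx !mul_mx_scalar scalar_mxM mul_scalar_mx scale_scalar_mx.
  by rewrite !scalerA -/c1 -/c2 (mulrC a1 c2) addrA.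
have -> : W *m N = (a2 * c1) *: PU + (a1 * a2) *: (PU *m PV) + (c2 * a1) *: PV.
  rewrite /W /N mul_row_col !mulmxDr -!scalemxAr mulmxA EL FL'.
  by rewrite (mulrC a2 c1).
rewrite /k (mulrC c2 c1) -!addrA; congr (_ + _).
by rewrite addrC -!addrA; congr (_ + _); rewrite addrC.
Qed.

Let LF : L *m F = G.
Proof.
have L_PU : L *m PU = L by rewrite -EL mulmxA LE mul1mx.
by rewrite -L_PU -mulmxA PU_F mulmxA LE mul1mx.
Qed.

Let L'E : L' *m E = H.
Proof.
have L'_PV : L' *m PV = L' by rewrite -FL' mulmxA L'F mul1mx.
by rewrite -L'_PV -mulmxA PV_E mulmxA L'F mul1mx.
Qed.

Let PV_F : PV *m F = F.
Proof. by rewrite -FL' -mulmxA L'F mulmx1. Qed.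

Lemma lowrank_swap : N *m W = block_mx ((a2 * c1)%:M + (a1 * a2) *: (G *m H)) (a2 *: G)
  ((c2 * a1) *: H) ((c2 * a1)%:M).
Proof.
rewrite /N /W mul_col_row !mulmxDl -!scalemxAl LE -!mulmxA PV_E PV_F mulmxA LF L'E L'F.
rewrite !scalemx1 -scalerDl; congr block_mx.
by congr (_ *: _); rewrite /c1; ring.
Qed.

Let Y := 'X - k%:P.
Let D := Y - (c2 * a1)%:P.

Let DE : D = 'X - c2%:P.
Proof.
rewrite /D /Y /k /c1 /c2 -!addrA; congr (_ + _).
by rewrite -!polyCN -!polyCD; congr polyC; ring.
Qed.

Let schur_complementE :
  D *: (Y%:M - map_mx polyC ((a2 * c1)%:M + (a1 * a2) *: (G *m H)))
    - (- map_mx polyC (a2 *: G)) *m (- map_mx polyC ((c2 * a1) *: H)) =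
  (('X - c1%:P) * ('X - c2%:P))%:M - ((a1 * a2)%:P * 'X) *: map_mx polyC (G *m H).
Proof.
rewrite mulmxN mulNmx opprK !map_mxZ -scalemxAl -scalemxAr -map_mxM scalerA.
rewrite map_mxD map_scalar_mx map_mxZ opprD addrA -(raddfB (@scalar_mx _ P)).
rewrite scalerBr scale_scalar_mx scalerA -addrA -opprD -scalerDl DE.
congr (_%:M - _ *: _); rewrite /Y /k /c1 /c2 !polyCB !polyCM polyC1; ring.
Qed.

(* Sylvester's identity trades the rank-(P + Q) term W N of T - k I for N W;
   a Schur complement then eliminates the H-block of N W. *)
Lemma char_poly_relax_prod :
  Y ^+ (P + Q) * ('X - c2%:P) ^+ P * char_poly T =
  Y ^+ n * ('X - c2%:P) ^+ Q *
  \det ((('X - c1%:P) * ('X - c2%:P))%:M - ((a1 * a2)%:P * 'X) *: map_mx polyC (G *m H)).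
Proof.
have charT : char_poly_mx T = Y%:M - map_mx polyC W *m map_mx polyC N.
  rewrite /char_poly_mx relax_prod_lowrank map_mxD map_scalar_mx map_mxM opprD addrA.
  by rewrite /Y (raddfB (@scalar_mx _ n)).
have := det_sylvester (map_mx polyC W) (map_mx polyC N) Y.
rewrite -charT -map_mxM lowrank_swap map_block_mx (scalar_mx_block P Q) opp_block_mx.
rewrite add_block_mx !map_scalar_mx -(raddfB (@scalar_mx _ Q)) !sub0r -/D => sylv.
have := det_block_scalar (Y%:M - map_mx polyC ((a2 * c1)%:M + (a1 * a2) *: (G *m H)))
  (- map_mx polyC (a2 *: G)) (- map_mx polyC ((c2 * a1) *: H)) D.
rewrite schur_complementE => schur.
rewrite -{1 2}DE; transitivity (Y ^+ (P + Q) * \det (char_poly_mx T) * D ^+ P).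
  by rewrite /char_poly; ring.
by rewrite sylv -!mulrA; congr (_ * _); exact: schur.
Qed.

End RelaxedProductCharPoly.

Definition cos_block_mx (R : nzRingType) r p q (c : nat -> R) : 'M[R]_(r + p, r + q) :=
  block_mx (diag_mx (\row_(i < r) c i)) 0 0 0.

Lemma det_cos_block (R : comNzRingType) r p q (c : nat -> R) (al be : {poly R}) :
  \det (al%:M - be *: map_mx polyC (cos_block_mx r p q c *m cos_block_mx r q p c)) =
  (\prod_(i < r) (al - be * (c i ^+ 2)%:P)) * al ^+ p.
Proof.
rewrite /cos_block_mx mulmx_block !mulmx0 !mul0mx !addr0 mulmx_diag map_block_mx.
rewrite map_diag_mx !raddf0 scale_block_mx !scaler0 (scalar_mx_block r p).
rewrite opp_block_mx add_block_mx !oppr0 !addr0 det_ublock det_scalar; congr (_ * _).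
rewrite (_ : _ - _ = diag_mx (\row_(i < r) (al - be * (c i ^+ 2)%:P))).
  by rewrite det_diag; apply: eq_bigr => i _; rewrite mxE.
apply/matrixP => i j; rewrite !mxE; have [->|ij] := eqVneq i j.
  by rewrite !mulr1n expr2.
by rewrite !mulr0n mulr0 subr0.
Qed.

Section PrincipalStructure.
Variables (R : realType) (n : nat) (U V : {vspace 'cV[R]_n}) (PU PV : 'M[R]_n).
Variables (m : nat) (u v : nat -> 'cV[R]_n) (r : nat).
Hypotheses (hPU : is_proj_matrix U PU) (hPV : is_proj_matrix V PV).
Hypothesis hpv : principal_vectors U V m u v.
Hypothesis hm : m = minn (\dim U) (\dim V).
Hypothesis hr : pcos_support u v m r.

Local Notation pcos := (pcos u v).
Local Notation Us := (resid_space U r u).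
Local Notation Vs := (resid_space V r v).

Let r_le_m : (r <= m)%N. Proof. by case: hr. Qed.
Let lt_r_m i : (i < r)%N -> (i < m)%N. Proof. by move=> ir; apply: leq_trans r_le_m. Qed.

Let pcos_neq0 i : (i < r)%N -> pcos i != 0.
Proof. by move=> ir; case: hr => _ ->; rewrite ?lt_r_m // -ltnNge. Qed.

Let pcos_eq0 i : (r <= i)%N -> (i < m)%N -> pcos i = 0 := pcos_support_eq0 hr.

Lemma proj_pvU k : (k < m)%N -> PU *m v k = pcos k *: u k.
Proof. by move=> km; rewrite (proj_pv hPU (principal_vectors_sym hpv) km) pcosC. Qed.

Lemma u_memv i : (i < r)%N -> u i \in U.
Proof. by move=> ir; apply: (pv_memU hpv); apply: lt_r_m. Qed.

Lemma v_memv i : (i < r)%N -> v i \in V.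
Proof. by move=> ir; apply: (pv_memV hpv); apply: lt_r_m. Qed.

(* For j < r, pcos j <u_i, u_j> = <u_i, PU v_j> = <u_i, v_j>, which is 0 for i != j. *)
Lemma u_orthonormal i j : (i < r)%N -> (j < r)%N -> dotv (u i) (u j) = (i == j)%:R.
Proof.
move=> ir jr; have [<-|ij] := eqVneq i j; first by rewrite (pv_unitU hpv) // lt_r_m.
apply/eqP; rewrite -(mulIr_eq0 _ (mulIf (pcos_neq0 jr))) /= mulrC -dotvZr.
rewrite -proj_pvU ?lt_r_m // -(dotv_proj hPU) (proj_fix hPU) ?u_memv //.
by rewrite (pv_cross hpv) ?lt_r_m // eq_sym.
Qed.

Lemma v_orthonormal i j : (i < r)%N -> (j < r)%N -> dotv (v i) (v j) = (i == j)%:R.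
Proof.
move=> ir jr; have [<-|ij] := eqVneq i j; first by rewrite (pv_unitV hpv) // lt_r_m.
apply/eqP; rewrite -(mulIr_eq0 _ (mulIf (pcos_neq0 jr))) /= mulrC -dotvZr.
rewrite -(proj_pv hPV hpv) ?lt_r_m // -(dotv_proj hPV) (proj_fix hPV) ?v_memv //.
by rewrite dotvC (pv_cross hpv) ?lt_r_m.
Qed.

Let memUsP x := mem_resid_spaceP u_memv u_orthonormal x.
Let memVsP y := mem_resid_spaceP v_memv v_orthonormal y.

Lemma resid_orth_v x i : x \in Us -> (i < r)%N -> dotv x (v i) = 0.
Proof.
move=> /memUsP [xU x_orth] ir.
rewrite -(proj_fix hPU xU) (dotv_proj hPU) proj_pvU ?lt_r_m //.
by rewrite dotvZr dotvC x_orth // mulr0.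
Qed.

Lemma resid_orth_u y i : y \in Vs -> (i < r)%N -> dotv (u i) y = 0.
Proof.
move=> /memVsP [yV y_orth] ir.
rewrite -(proj_fix hPV yV) -(dotv_proj hPV) (proj_pv hPV hpv) ?lt_r_m //.
by rewrite dotvZl y_orth // mulr0.
Qed.

(* If r < m, the residual spaces are admissible at stage r, where the maximal cosine
   is 0; if r = m, one of them is trivial since m = min (dim U) (dim V). *)
Lemma resid_spaces_orth x y : x \in Us -> y \in Vs -> dotv x y = 0.
Proof.
have [rm | mr] := ltnP r m.
  have le0 x' y' : x' \in Us -> y' \in Vs -> dotv x' y' <= 0.
    move=> xs' ys'; have [xU' _] := (memUsP x').1 xs'; have [yV' _] := (memVsP y').1 ys'.
    have := pv_bound hpv rm xU' yV'; rewrite pcos_eq0 // !mul0r; apply=> i ir.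
    by split; [apply: resid_orth_v | apply: resid_orth_u].
  move=> xs ys; apply: le_anti; rewrite le0 //=.
  by rewrite -oppr_le0 -dotvNl le0 // rpredN.
have rmE : r = m by apply/eqP; rewrite eqn_leq r_le_m.
have dimU := dim_resid_space u_memv u_orthonormal.
have dimV := dim_resid_space v_memv v_orthonormal.
move: hm; rewrite -rmE /minn; case: ifP => _ rE xs ys.
  have /eqP : \dim Us = 0%N by apply/eqP; rewrite -(eqn_add2l r) addn0 -dimU rE.
  by rewrite dimv_eq0 => /eqP Us0; move: xs; rewrite Us0 memv0 => /eqP ->; rewrite dotv0l.
have /eqP : \dim Vs = 0%N by apply/eqP; rewrite -(eqn_add2l r) addn0 -dimV rE.
by rewrite dimv_eq0 => /eqP Vs0; move: ys; rewrite Vs0 memv0 => /eqP ->; rewrite dotv0r.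
Qed.

Lemma resid_orth_memV x y : x \in Us -> y \in V -> dotv x y = 0.
Proof.
move=> xs yV; rewrite (resid_decomp r v y) dotvDr dotv_sumr big1 ?add0r.
  by apply: resid_spaces_orth => //; apply: resid_mem_space.
by move=> i _; rewrite dotvZr resid_orth_v // mulr0.
Qed.

Lemma resid_orth_memU x y : x \in U -> y \in Vs -> dotv x y = 0.
Proof.
move=> xU ys; rewrite (resid_decomp r u x) dotvDl dotv_suml big1 ?add0r.
  by apply: resid_spaces_orth => //; apply: resid_mem_space.
by move=> i _; rewrite dotvZl (resid_orth_u ys (ltn_ord i)) mulr0.
Qed.

Lemma dim_cap_le_m : (\dim (U :&: V) <= m)%N.
Proof. by rewrite hm leq_min !dimvS ?capvSl ?capvSr. Qed.

Let cap_coef x i : x \in U -> x \in V -> (i < m)%N ->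
  dotv (u i) x = pcos i ^+ 2 * dotv (u i) x.
Proof.
move=> xU xV im.
have ux : dotv (u i) x = pcos i * dotv (v i) x.
  by rewrite -{1}(proj_fix hPV xV) -(dotv_proj hPV) (proj_pv hPV hpv) // dotvZl.
have vx : dotv (v i) x = pcos i * dotv (u i) x.
  by rewrite -{1}(proj_fix hPU xU) -(dotv_proj hPU) proj_pvU // dotvZl.
by rewrite {1}ux vx mulrA expr2.
Qed.

(* A vector of U :&: V has no residual part, and its coefficient on u_i is
   multiplied by pcos i ^ 2 under PU PV, hence vanishes once pcos i < 1. *)
Lemma cap_sub_span x j : x \in (U :&: V)%VS -> (j < m)%N -> pcos j < 1 ->
  x \in <<mkseq u j>>%VS.
Proof.
move=> /memv_capP [xU xV] jm pcos_j.
have resid0 : resid_mx r u *m x = 0.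
  have /memUsP [_ res_orth] := resid_mem_space r u xU.
  apply: dotvv_eq0; rewrite [X in dotv _ X]resid_mxE dotvBr dotv_sumr big1 ?subr0.
    by apply: resid_orth_memV => //; apply: resid_mem_space.
  by move=> i _; rewrite dotvZr (dotvC (resid_mx r u *m x)) res_orth // mulr0.
rewrite (resid_decomp r u x) resid0 addr0 rpred_sum // => i _.
have [ij | ji] := ltnP i j.
  by rewrite memvZ // memv_span // -[u i](@nth_mkseq _ 0 u j i) // mem_nth // size_mkseq.
have im : (i < m)%N := lt_r_m (ltn_ord i).
have pcos_i : pcos i < 1 by apply: le_lt_trans pcos_j; apply: (pcos_nonincr hpv).
have := pcos_ge0 hpv im; have := cap_coef xU xV im.
move: (dotv (u i) x) => a a_eq pcos_i_ge0.
have : a * (1 - pcos i ^+ 2) = 0 by rewrite mulrBr mulr1 mulrC -a_eq subrr.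
have pcos_sqr_lt1 : pcos i ^+ 2 < 1 by rewrite expr2; nra.
move/eqP; rewrite mulf_eq0 subr_eq0 (gt_eqF pcos_sqr_lt1) orbF => /eqP ->.
by rewrite scale0r rpred0.
Qed.

Lemma pcos_cap i : (i < \dim (U :&: V))%N -> pcos i = 1.
Proof.
move=> i_lt_s; have im : (i < m)%N := leq_trans i_lt_s dim_cap_le_m.
apply/eqP; apply: contraT => pcos_neq1.
have pcos_lt1 : pcos i < 1 by rewrite lt_neqAle pcos_neq1 (pcos_le1 hpv).
have /dimvS cap_le : (U :&: V <= <<mkseq u i>>)%VS.
  by apply/subvP => x x_cap; apply: cap_sub_span.
by have := leq_trans i_lt_s (leq_trans cap_le (dim_span _)); rewrite size_mkseq ltnn.
Qed.

Lemma dim_cap_le_r : (\dim (U :&: V) <= r)%N.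
Proof.
rewrite leqNgt; apply/negP => rs.
have rm : (r < m)%N := leq_trans rs dim_cap_le_m.
by move: (pcos_eq0 (leqnn r) rm); rewrite pcos_cap // => /eqP; rewrite oner_eq0.
Qed.

Lemma proj_adapted_cross : PU *m adapted_mx V r v =
  adapted_mx U r u *m cos_block_mx r (\dim Us) (\dim Vs) pcos.
Proof.
rewrite /adapted_mx /cos_block_mx mul_mx_row mul_row_block !mulmx0 !addr0; congr row_mx.
  rewrite /onb_mx mulmx_cols (_ : mx_of_cols _ *m _ = mx_of_cols (fun j : 'I_r => pcos j *: u j)).
    by apply: eq_mx_of_cols => j; rewrite proj_pvU // lt_r_m.
  by rewrite mul_mx_diag; apply/matrixP => i j; rewrite !mxE mulrC.
rewrite /resid_basis_mx mulmx_cols (@eq_mx_of_cols _ _ _ _ (fun _ => 0)).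
  by apply/matrixP => i j; rewrite !mxE.
move=> j; apply: (proj_orth_eq0 hPU) => y yU.
by rewrite dotvC resid_orth_memU // resid_basis_mem.
Qed.

End PrincipalStructure.

Lemma prod_factor_assemble (Rg : comNzRingType) (A B C O : Rg) (g : nat -> Rg)
    (n r s dU dV : nat) :
  (s <= r)%N -> (forall i, (i < s)%N -> g i = O * A) ->
  (forall i, (r <= i)%N -> (i < minn (r + dU) (r + dV))%N -> g i = C * B) ->
  ((r + dU) + (r + dV) <= s + n)%N ->
  A ^+ ((r + dU) + (r + dV)) * B ^+ (r + dU) *
   (O ^+ s * A ^+ (s + n - (r + dU) - (r + dV)) * B ^+ (maxn 0 ((r + dV) - (r + dU)))
    * C ^+ (maxn 0 ((r + dU) - (r + dV))) * \prod_(s <= i < minn (r + dU) (r + dV)) g i)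
  = A ^+ n * B ^+ (r + dV) * ((\prod_(i < r) g i) * (C * B) ^+ dU).
Proof.
move=> sr g_lt_s g_ge_r dim_le.
have r_le_min : (r <= minn (r + dU) (r + dV))%N by rewrite leq_min !leq_addr.
rewrite -(big_mkord xpredT g) (big_cat_nat (leq0n s) sr) (big_cat_nat sr r_le_min) /=.
rewrite (eq_big_nat _ _ (F1 := g) (F2 := fun _ => O * A) (m := 0)); last first.
  by move=> i /andP [_ ?]; rewrite g_lt_s.
rewrite [X in _ * (_ * (_ * X)) = _](eq_big_nat _ _ (F2 := fun _ => C * B)); last first.
  by move=> i /andP [? ?]; rewrite g_ge_r.
rewrite !prodr_const_nat subn0; move: (\prod_(s <= i < r) g i) => Pi.
have [t rE] : exists t, r = (s + t)%N by exists (r - s)%N; rewrite subnKC.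
subst r.
set e := (s + n - _ - _)%N.
have nE : n = (e + s + t + t + dU + dV)%N by rewrite /e; lia.
clearbody e; subst n; have [UV | VU] := leqP dU dV.
  have [d dVE] : exists d, dV = (dU + d)%N by exists (dV - dU)%N; rewrite subnKC.
  subst dV.
  have -> : minn (s + t + dU) (s + t + (dU + d)) = (s + t + dU)%N by lia.
  have -> : maxn 0 (s + t + (dU + d) - (s + t + dU)) = d by lia.
  have -> : maxn 0 (s + t + dU - (s + t + (dU + d))) = 0%N by lia.
  have -> : (s + t + dU - (s + t))%N = dU by lia.
  by rewrite !exprD !exprMn expr0; ring.
have [d dUE] : exists d, dU = (dV + d)%N by exists (dU - dV)%N; rewrite subnKC // ltnW.
subst dU.
have -> : minn (s + t + (dV + d)) (s + t + dV) = (s + t + dV)%N by lia.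
have -> : maxn 0 (s + t + dV - (s + t + (dV + d))) = 0%N by lia.
have -> : maxn 0 (s + t + (dV + d) - (s + t + dV)) = d by lia.
have -> : (s + t + dV - (s + t))%N = dV by lia.
by rewrite !exprD !exprMn expr0; ring.
Qed.

Definition lam_poly (R : realType) (a1 a2 c : R) : {poly R} :=
  'X ^+ 2 - (lam_b a1 a2 c)%:P * 'X + ((1 - a1) * (1 - a2))%:P.

Section LamPoly.
Variables (R : realType) (a1 a2 : R).

Lemma lam_polyE c :
  ('X - (1 - a1)%:P) * ('X - (1 - a2)%:P) - ((a1 * a2)%:P * 'X) * (c ^+ 2)%:P =
  lam_poly a1 a2 c.
Proof. by rewrite /lam_poly /lam_b !(polyCD, polyCB, polyCM, polyCN, polyC1); ring. Qed.

Lemma lam_poly1 : lam_poly a1 a2 1 = ('X - 1%:P) * ('X - ((1 - a1) * (1 - a2))%:P).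
Proof. by rewrite -lam_polyE expr1n !(polyCB, polyCM, polyC1); ring. Qed.

Lemma lam_poly0 : lam_poly a1 a2 0 = ('X - (1 - a1)%:P) * ('X - (1 - a2)%:P).
Proof. by rewrite -lam_polyE expr0n /= polyC0 mulr0 subr0. Qed.

(* lam1 and lam2 are the two roots of lam_poly: their sum is lam_b and their
   product (1 - a1) (1 - a2), whatever the sign of the discriminant. *)
Lemma lam12_prod c :
  ('X - (lam1 a1 a2 c)%:P) * ('X - (lam2 a1 a2 c)%:P) =
  map_poly (real_complex R) (lam_poly a1 a2 c).
Proof.
have vieta (x y : R[i]) : ('X - x%:P) * ('X - y%:P) = 'X ^+ 2 - (x + y)%:P * 'X + (x * y)%:P.
  by rewrite polyCD polyCM; ring.
rewrite vieta /lam_poly [in RHS]rmorphD [in RHS]rmorphB !rmorphM /= !map_polyC map_polyX -expr2.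
set b := lam_b a1 a2 c; congr (_ - _ * _ + _).
  by rewrite /lam1 /lam2 -/b addrACA subrr addr0 /RtoC -rmorphD /= -splitr.
rewrite -!polyCM; congr polyC; rewrite -rmorphM /= /lam1 /lam2 -/b.
set z := RtoC (b / 2); set w := sqrtC _.
have -> : (z + w) * (z - w) = z ^+ 2 - w ^+ 2 by ring.
by rewrite sqrtCK /z /RtoC -rmorphXn -rmorphB /=; congr (real_complex R _); field.
Qed.

End LamPoly.

Lemma dimv_add_le_cap (R : realType) n (U V : {vspace 'cV[R]_n}) :
  (\dim U + \dim V <= \dim (U :&: V) + n)%N.
Proof.
rewrite -dimv_sum_cap addnC leq_add2l (leq_trans (dimvS (subvf _))) //.
by rewrite dimvf /dim /= muln1.
Qed.

Lemma char_poly_relax_factor (R : realType) n (U V : {vspace 'cV[R]_n})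
    (PU PV : 'M[R]_n) m (u v : nat -> 'cV[R]_n) r (a1 a2 : R) :
  is_proj_matrix U PU -> is_proj_matrix V PV -> principal_vectors U V m u v ->
  m = minn (\dim U) (\dim V) -> pcos_support u v m r ->
  let p := \dim U in let q := \dim V in let s := \dim (U :&: V) in
  char_poly (relax_mx a2 PU *m relax_mx a1 PV) =
    ('X - 1%:P) ^+ s * ('X - ((1 - a1) * (1 - a2))%:P) ^+ (s + n - p - q)
    * ('X - (1 - a2)%:P) ^+ (maxn 0 (q - p)) * ('X - (1 - a1)%:P) ^+ (maxn 0 (p - q))
    * \prod_(s <= i < m) lam_poly a1 a2 (pcos u v i).
Proof.
move=> hPU hPV hpv hm hr p q s.
have hm' : m = minn (\dim V) (\dim U) by rewrite minnC.
have hr' : pcos_support v u m r by rewrite /pcos_support pcosC.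
have uU := u_memv hpv hr; have u_on := u_orthonormal hPU hpv hr.
have vV := v_memv hpv hr; have v_on := v_orthonormal hPV hpv hr.
have := char_poly_relax_prod a1 a2 (adapted_mx_coord hPU r u) (adapted_coord_mxK hPU uU u_on)
  (adapted_mx_coord hPV r v) (adapted_coord_mxK hPV vV v_on)
  (proj_adapted_cross hPU hPV hpv hm hr)
  (proj_adapted_cross hPV hPU (principal_vectors_sym hpv) hm' hr').
rewrite (pcosC u v) det_cos_block.
rewrite (eq_bigr _ (fun (i : 'I_r) _ => lam_polyE a1 a2 (pcos u v i))) => factor.
have dimU := dim_resid_space uU u_on; have dimV := dim_resid_space vV v_on.
apply: (@mulfI _ (('X - ((1 - a1) * (1 - a2))%:P) ^+ (p + q) * ('X - (1 - a2)%:P) ^+ p)).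
  by rewrite mulf_neq0 // expf_neq0 // polyXsubC_eq0.
rewrite /p /q /s hm dimU dimV factor; symmetry; apply: prod_factor_assemble.
- exact: dim_cap_le_r hPU hPV hpv hm hr.
- by move=> i i_lt_s; rewrite (pcos_cap hPU hPV hpv hm hr i_lt_s) lam_poly1.
- by move=> i ri im; rewrite (pcos_support_eq0 hr ri) ?lam_poly0 // hm dimU dimV.
- by rewrite -dimU -dimV dimv_add_le_cap.
Qed.

Unset Implicit Arguments.
Set Strict Implicit.

Theorem theorem1 (R : realType) (n : nat) (U V : {vspace 'cV[R]_n})
    (a1 a2 : R) (PU PV : 'M[R]_n) (u v : nat -> 'cV[R]_n) :
  is_proj_matrix U PU -> is_proj_matrix V PV ->
  let p := \dim U in let q := \dim V in let s := \dim (U :&: V)%VS in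
  principal_vectors U V (minn p q) u v ->
  let T := relax_mx a2 PU *m relax_mx a1 PV in
  char_poly (map_mx (@RtoC R) T) =
    ('X - (RtoC 1)%:P) ^+ s
    * ('X - (RtoC ((1 - a1) * (1 - a2)))%:P) ^+ (s + n - p - q)
    * ('X - (RtoC (1 - a2))%:P) ^+ (maxn 0 (q - p))
    * ('X - (RtoC (1 - a1))%:P) ^+ (maxn 0 (p - q))
    * \prod_(s <= i < minn p q)
        (('X - (lam1 a1 a2 (dotv (u i) (v i)))%:P)
         * ('X - (lam2 a1 a2 (dotv (u i) (v i)))%:P)).
Proof.
move=> hPU hPV p q s hpv T.
have [r hr] := exists_pcos_support hpv.
have charT := char_poly_relax_factor a1 a2 hPU hPV hpv (erefl _) hr.
rewrite (_ : map_mx _ T = map_mx (real_complex R) T) // -map_char_poly charT.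
rewrite !rmorphM !rmorphXn rmorph_prod /= -polyCM !map_polyXsubC.
by congr (_ * _); apply: eq_bigr => i _; rewrite lam12_prod.
Qed.
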